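(* Let $\omega=[\mathbf a,\mathbf b]\subseteq[1,\infty)$ with $\mathbf a<\mathbf b$, and let $0<\delta<1$, $\Delta=(-\delta,\delta)$. Let $n\ge0$ and suppose the sequences $\mathbf a_k,\mathbf b_k,\mathbf c_k,\mathbf f_k,\mathbf d_k$ (described in the context) have been constructed for $0\le k\le n+1$ such that for every $0\le k\le n$: $0\notin\mathbf c_{k+1}$, $\mathbf a_{k+1}\cap\mathbf b_{k+1}=\emptyset$, $0\notin\mathbf f_{k+1}$, and, for every $0\le k\le n-1$, the interior of $\overline{\omega_{k+1}}$ is disjoint from $\Delta$. (These are exactly the checks passed whenever the iteration procedure reports step $n+1$.) Then $c_{n+1}(\mathbf a)\in\mathbf a_{n+1}$, $c_{n+1}(\mathbf b)\in\mathbf b_{n+1}$, $c'_{n+1}(\omega)\subseteq\mathbf c_{n+1}$, $(f^{n+1})'(\omega)\subseteq \mathbf f_{n+1}$, $\big(c'_{n+1}/(f^{n+1})'\big)(\omega)\subseteq\mathbf d_{n+1}$, and $\underline{\omega_{n+1}}\subseteq\omega_{n+1}\subseteq\overline{\omega_{n+1}}$.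
   Context: For a real parameter $a$ let $f_a(x)=a-x^2$. Define $c_0(a)=a$ and $c_{k+1}(a)=f_a(c_k(a))$ for $k\ge0$. For a parameter interval $\omega$ let $\omega_k:=\{c_k(a):a\in\omega\}$. Here $c_k'(a)$ denotes the derivative of $a\mapsto c_k(a)$ with respect to $a$, and $(f_a^k)'(c_0(a))$ the $x$-derivative of $f_a^k$ at $x=c_0(a)$ (with $f_a^0=\mathrm{id}$). Write $c_k'(\omega)=\{c_k'(a):a\in\omega\}$, $(f^k)'(\omega)=\{(f_a^k)'(c_0(a)):a\in\omega\}$, $\big(c_k'/(f^k)'\big)(\omega)=\{c_k'(a)/(f_a^k)'(c_0(a)):a\in\omega\}$. An interval $[x^-,x^+]$ has definite sign if $0\notin[x^-,x^+]$. For intervals $x,y$ let $g^-(x,y)=\min\{-2uv:u\in x,v\in y\}$, $g^+(x,y)=\max\{-2uv:u\in x,v\in y\}$. Construction. Real numbers $\mathbf a_k^\pm,\mathbf b_k^\pm,\mathbf c_k^\pm,\mathbf f_k^\pm,\mathbf d_k^\pm$ define intervals $\mathbf a_k=[\mathbf a_k^-,\mathbf a_k^+]$, etc. Let $\overline{\omega_k}$ be the convex hull of $\mathbf a_k\cup\mathbf b_k$; if $\mathbf a_k\cap\mathbf b_k=\emptyset$, let $\underline{\omega_k}$ be $[\mathbf a_k^+,\mathbf b_k^-]$ if $\mathbf a_k^+<\mathbf b_k^-$ and $[\mathbf b_k^+,\mathbf a_k^-]$ otherwise. Initially $\mathbf a_0^\pm=\mathbf a$, $\mathbf b_0^\pm=\mathbf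 b$, $\mathbf c_0^\pm=\mathbf f_0^\pm=\mathbf d_0^\pm=1$. Given step $k$ with $0\notin\overline{\omega_k}$, step $k+1$ consists of any real numbers satisfying: if $\mathbf a_k^+<0$, $\mathbf a_{k+1}^-\le f_{\mathbf a}(\mathbf a_k^-)$, $\mathbf a_{k+1}^+\ge f_{\mathbf a}(\mathbf a_k^+)$, $\mathbf b_{k+1}^-\le f_{\mathbf b}(\mathbf b_k^-)$, $\mathbf b_{k+1}^+\ge f_{\mathbf b}(\mathbf b_k^+)$; otherwise $\mathbf a_{k+1}^-\le f_{\mathbf a}(\mathbf a_k^+)$, $\mathbf a_{k+1}^+\ge f_{\mathbf a}(\mathbf a_k^-)$, $\mathbf b_{k+1}^-\le f_{\mathbf b}(\mathbf b_k^+)$, $\mathbf b_{k+1}^+\ge f_{\mathbf b}(\mathbf b_k^-)$; $\mathbf c_{k+1}^-\le 1+g^-(\mathbf c_k,\overline{\omega_k})$, $\mathbf c_{k+1}^+\ge 1+g^+(\mathbf c_k,\overline{\omega_k})$; $\mathbf f_{k+1}^-\le g^-(\mathbf f_k,\overline{\omega_k})$, $\mathbf f_{k+1}^+\ge g^+(\mathbf f_k,\overline{\omega_k})$; and, when $\mathbf f_{k+1}$ has definite sign, $\mathbf d_{k+1}^-\le \mathbf d_k^-+1/\mathbf f_{k+1}^+$, $\mathbf d_{k+1}^+\ge\mathbf d_k^++1/\mathbf f_{k+1}^-$. *)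

From Stdlib Require Import Reals Lra.
From Coquelicot Require Import Coquelicot.
Open Scope R_scope.

Definition fpar (a x : R) : R := a - x ^ 2.

Fixpoint cc (k : nat) (a : R) : R :=
  match k with O => a | S k => fpar a (cc k a) end.

Definition fiter (k : nat) (a x : R) : R := Nat.iter k (fpar a) x.

Definition dc (k : nat) (a : R) : R := Derive (fun t => cc k t) a.

(* (f_a^k)'(c_0(a)): x-derivative of f_a^k at x = c_0(a) *)
Definition dfk (k : nat) (a : R) : R := Derive (fun x => fiter k a x) (cc 0 a).

Record bounds := {
  aL : nat -> R; aH : nat -> R;
  bL : nat -> R; bH : nat -> R;
  cL : nat -> R; cH : nat -> R;
  fL : nat -> R; fH : nat -> R;
  dL : nat -> R; dH : nat -> R }.

Definition definite_sign (lo hi : R) : Prop := ~ (lo <= 0 <= hi).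

(* g^-(x,y) = min{-2uv : u in [xl,xh], v in [yl,yh]}, g^+ the max;
   for a bilinear function the extrema over a box are attained at corners. *)
Definition gmin (xl xh yl yh : R) : R :=
  Rmin (Rmin (-2 * xl * yl) (-2 * xl * yh)) (Rmin (-2 * xh * yl) (-2 * xh * yh)).
Definition gmax (xl xh yl yh : R) : R :=
  Rmax (Rmax (-2 * xl * yl) (-2 * xl * yh)) (Rmax (-2 * xh * yl) (-2 * xh * yh)).

(* overline{omega_k}: convex hull of a_k U b_k *)
Definition hull_lo (D : bounds) (k : nat) : R := Rmin (aL D k) (bL D k).
Definition hull_hi (D : bounds) (k : nat) : R := Rmax (aH D k) (bH D k).

(* underline{omega_k} (used when a_k and b_k are disjoint) *)
Definition under_lo (D : bounds) (k : nat) : R :=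
  if Rlt_dec (aH D k) (bL D k) then aH D k else bH D k.
Definition under_hi (D : bounds) (k : nat) : R :=
  if Rlt_dec (aH D k) (bL D k) then bL D k else aL D k.

Definition intervals_disjoint (xl xh yl yh : R) : Prop :=
  ~ (exists x, xl <= x <= xh /\ yl <= x <= yh).

Definition init_ok (A B : R) (D : bounds) : Prop :=
  aL D 0 = A /\ aH D 0 = A /\ bL D 0 = B /\ bH D 0 = B /\
  cL D 0 = 1 /\ cH D 0 = 1 /\ fL D 0 = 1 /\ fH D 0 = 1 /\
  dL D 0 = 1 /\ dH D 0 = 1.

Definition step_ok (A B : R) (D : bounds) (k : nat) : Prop :=
  (aH D k < 0 ->
     aL D (S k) <= fpar A (aL D k) /\ aH D (S k) >= fpar A (aH D k) /\
     bL D (S k) <= fpar B (bL D k) /\ bH D (S k) >= fpar B (bH D k)) /\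
  (~ aH D k < 0 ->
     aL D (S k) <= fpar A (aH D k) /\ aH D (S k) >= fpar A (aL D k) /\
     bL D (S k) <= fpar B (bH D k) /\ bH D (S k) >= fpar B (bL D k)) /\
  cL D (S k) <= 1 + gmin (cL D k) (cH D k) (hull_lo D k) (hull_hi D k) /\
  cH D (S k) >= 1 + gmax (cL D k) (cH D k) (hull_lo D k) (hull_hi D k) /\
  fL D (S k) <= gmin (fL D k) (fH D k) (hull_lo D k) (hull_hi D k) /\
  fH D (S k) >= gmax (fL D k) (fH D k) (hull_lo D k) (hull_hi D k) /\
  (definite_sign (fL D (S k)) (fH D (S k)) ->
     dL D (S k) <= dL D k + 1 / fH D (S k) /\
     dH D (S k) >= dH D k + 1 / fL D (S k)).

Definition constructed (A B : R) (D : bounds) (n : nat) : Prop :=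
  init_ok A B D /\
  forall k : nat, (k <= n)%nat ->
    definite_sign (hull_lo D k) (hull_hi D k) /\ step_ok A B D k.

From Stdlib Require Import Reals Lra Lia.
From Coquelicot Require Import Coquelicot.
Open Scope R_scope.

(* The corollary is proved by induction on k <= n+1 with the invariant
   [enclosed]: the endpoint values c_k(a), c_k(b) lie in the boxes a_k, b_k,
   and for every parameter t in omega the numbers c_k'(t), (f^k)'(t), their
   quotient and c_k(t) itself lie in c_k, f_k, d_k and the hull of a_k, b_k.
   The inductive step combines
   - the derivative recursions c_{k+1}' = 1 - 2 c_k c_k' and
     (f^{k+1})' = -2 c_k (f^k)', whence the quotient gains 1/(f^{k+1})';
   - elementary interval arithmetic: monotonicity of a - x^2 on sign-definite
     intervals, corner bounds for the bilinear map (u,v) |-> -2uv and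
     monotonicity of 1/x on sign-definite intervals;
   - the mean value theorem: since c_{k+1}' has definite sign on omega,
     c_{k+1}(t) lies between the endpoint values, hence in the hull.
   The inner enclosure of omega_{n+1} follows from the intermediate value
   theorem, as the gap between the disjoint boxes a_{n+1}, b_{n+1} lies
   between c_{n+1}(a) and c_{n+1}(b). *)

Lemma is_derive_sub_square (h g : R -> R) x h' g' :
  is_derive h x h' -> is_derive g x g' ->
  is_derive (fun y => h y - g y ^ 2) x (h' - 2 * g x * g').
Proof.
  intros Hh Hg.
  replace (h' - 2 * g x * g') with (h' - INR 2 * g' * g x ^ 1) by (simpl; ring).
  exact (is_derive_minus _ _ _ _ _ Hh (is_derive_pow _ 2 _ _ Hg)).
Qed.

Lemma continuity_of_derivable (f : R -> R) :
  (forall t, ex_derive f t) -> continuity f.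
Proof.
  intros Hf t. apply continuity_pt_filterlim.
  exact (ex_derive_continuous (K := R_AbsRing) (V := R_NormedModule) f t (Hf t)).
Qed.

Lemma ex_derive_cc k t : ex_derive (fun s => cc k s) t.
Proof.
  revert t; induction k as [|k IH]; intro t.
  - apply ex_derive_id.
  - eexists. change (fun s => cc (S k) s) with (fun s => s - cc k s ^ 2).
    apply is_derive_sub_square; [exact (is_derive_id t) | apply Derive_correct, IH].
Qed.

Lemma dc_0 t : dc 0 t = 1.
Proof. exact (Derive_id t). Qed.

Lemma dc_S k t : dc (S k) t = 1 - 2 * cc k t * dc k t.
Proof.
  apply is_derive_unique. change (fun s => cc (S k) s) with (fun s => s - cc k s ^ 2).
  apply is_derive_sub_square; [exact (is_derive_id t) | apply Derive_correct, ex_derive_cc].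
Qed.

Lemma ex_derive_fiter k a x : ex_derive (fun y => fiter k a y) x.
Proof.
  revert x; induction k as [|k IH]; intro x.
  - apply ex_derive_id.
  - eexists. change (fun y => fiter (S k) a y) with (fun y => a - fiter k a y ^ 2).
    apply is_derive_sub_square; [exact (is_derive_const a x) | apply Derive_correct, IH].
Qed.

Lemma Derive_fiter_S k a x :
  Derive (fun y => fiter (S k) a y) x
  = -2 * fiter k a x * Derive (fun y => fiter k a y) x.
Proof.
  apply is_derive_unique. change (fun y => fiter (S k) a y) with (fun y => a - fiter k a y ^ 2).
  replace (-2 * fiter k a x * Derive (fun y => fiter k a y) x)
    with (0 - 2 * fiter k a x * Derive (fun y => fiter k a y) x) by ring.
  apply is_derive_sub_square; [exact (is_derive_const a x) | apply Derive_correct, ex_derive_fiter].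
Qed.

Lemma fiter_at_param k a : fiter k a a = cc k a.
Proof.
  induction k as [|k IH]; [reflexivity|].
  unfold fiter in *; simpl. rewrite IH. reflexivity.
Qed.

Lemma dfk_0 a : dfk 0 a = 1.
Proof. exact (Derive_id a). Qed.

Lemma dfk_S k a : dfk (S k) a = -2 * cc k a * dfk k a.
Proof. unfold dfk; simpl cc. rewrite Derive_fiter_S, fiter_at_param. reflexivity. Qed.

Lemma quotient_step c d F :
  -2 * c * F <> 0 -> (1 - 2 * c * d) / (-2 * c * F) = d / F + 1 / (-2 * c * F).
Proof.
  intros Hnz.
  assert (c <> 0) by (intro E; apply Hnz; rewrite E; ring).
  assert (F <> 0) by (intro E; apply Hnz; rewrite E; ring).
  field; auto.
Qed.

Lemma fpar_enclosure_neg a lo hi x :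
  hi < 0 -> lo <= x <= hi -> fpar a lo <= fpar a x <= fpar a hi.
Proof. unfold fpar; intros; split; nra. Qed.

Lemma fpar_enclosure_pos a lo hi x :
  0 < lo -> lo <= x <= hi -> fpar a hi <= fpar a x <= fpar a lo.
Proof. unfold fpar; intros; split; nra. Qed.

Lemma linear_enclosure xl xh u p :
  xl <= u <= xh -> Rmin (p * xl) (p * xh) <= p * u <= Rmax (p * xl) (p * xh).
Proof.
  intros Hu. destruct (Rle_or_lt 0 p).
  - rewrite Rmin_left, Rmax_right by nra. split; nra.
  - rewrite Rmin_right, Rmax_left by nra. split; nra.
Qed.

Lemma product_enclosure xl xh yl yh u v :
  xl <= u <= xh -> yl <= v <= yh ->
  gmin xl xh yl yh <= -2 * u * v <= gmax xl xh yl yh.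
Proof.
  intros Hu Hv.
  pose proof (linear_enclosure xl xh u (-2 * v) Hu) as Hx.
  pose proof (linear_enclosure yl yh v (-2 * xl) Hv) as Hl.
  pose proof (linear_enclosure yl yh v (-2 * xh) Hv) as Hh.
  unfold gmin, gmax.
  replace (-2 * u * v) with (-2 * v * u) by ring.
  replace (-2 * v * xl) with (-2 * xl * v) in Hx by ring.
  replace (-2 * v * xh) with (-2 * xh * v) in Hx by ring.
  revert Hx Hl Hh. unfold Rmin, Rmax. repeat destruct Rle_dec; intros; lra.
Qed.

Lemma reciprocal_enclosure lo hi F :
  lo <= F <= hi -> definite_sign lo hi -> 1 / hi <= 1 / F <= 1 / lo.
Proof.
  unfold definite_sign; intros HF Hs.
  assert (Hsign : 0 < lo \/ hi < 0) by lra.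
  assert (0 < F * hi) by (destruct Hsign; nra).
  assert (0 < F * lo) by (destruct Hsign; nra).
  assert (F <> 0 /\ hi <> 0 /\ lo <> 0) as (? & ? & ?)
    by (repeat split; intro E; subst; lra).
  split.
  - assert (E : 1 / F - 1 / hi = (hi - F) * / (F * hi)) by (field; auto).
    assert (0 < / (F * hi)) by (apply Rinv_0_lt_compat; auto). nra.
  - assert (E : 1 / lo - 1 / F = (F - lo) * / (F * lo)) by (field; auto).
    assert (0 < / (F * lo)) by (apply Rinv_0_lt_compat; auto). nra.
Qed.

(* Mean value theorem: if f' has definite sign on [A,B], f is monotone
   there, so f(t) lies between f(A) and f(B). *)
Lemma between_endpoints (f f' : R -> R) A B lo hi :
  A <= B -> (forall t, is_derive f t (f' t)) ->
  (forall t, A <= t <= B -> lo <= f' t <= hi) -> definite_sign lo hi ->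
  forall t, A <= t <= B -> Rmin (f A) (f B) <= f t <= Rmax (f A) (f B).
Proof.
  intros HAB Hder Hbnd Hs t Ht. unfold definite_sign in Hs.
  assert (Hcont : continuity f)
    by (apply continuity_of_derivable; intro s; eexists; apply Hder).
  assert (Hmvt : forall p q, A <= p <= q -> q <= B ->
            exists c, A <= c <= B /\ f q - f p = f' c * (q - p)).
  { intros p q Hp Hq.
    destruct (MVT_gen f p q f') as [c [Hc E]].
    - intros x _. apply Hder.
    - intros x _. apply Hcont.
    - rewrite Rmin_left, Rmax_right in Hc by lra.
      exists c; split; [lra | exact E]. }
  destruct (Hmvt A t) as [c1 [Hc1 E1]]; [lra | lra |].
  destruct (Hmvt t B) as [c2 [Hc2 E2]]; [lra | lra |].
  pose proof (Hbnd c1 Hc1); pose proof (Hbnd c2 Hc2).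
  assert (Hsign : 0 < lo \/ hi < 0) by lra.
  unfold Rmin, Rmax; repeat destruct Rle_dec; destruct Hsign; nra.
Qed.

Lemma between_in_hull al ah bl bh p q x :
  al <= p <= ah -> bl <= q <= bh -> Rmin p q <= x <= Rmax p q ->
  Rmin al bl <= x <= Rmax ah bh.
Proof. unfold Rmin, Rmax; repeat destruct Rle_dec; intros; lra. Qed.

Lemma gap_between D k p q y :
  intervals_disjoint (aL D k) (aH D k) (bL D k) (bH D k) ->
  aL D k <= p <= aH D k -> bL D k <= q <= bH D k ->
  under_lo D k <= y <= under_hi D k -> Rmin p q <= y <= Rmax p q.
Proof.
  intros Hdis Hp Hq. unfold under_lo, under_hi.
  destruct (Rlt_dec (aH D k) (bL D k)) as [Hlt | Hge].
  - unfold Rmin, Rmax; repeat destruct Rle_dec; intros; lra.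
  - assert (bH D k < aL D k).
    { destruct (Rlt_or_le (bH D k) (aL D k)) as [h | h]; [exact h |].
      exfalso. apply Hdis. exists (Rmax (aL D k) (bL D k)).
      unfold Rmax; destruct Rle_dec; lra. }
    unfold Rmin, Rmax; repeat destruct Rle_dec; intros; lra.
Qed.

Definition enclosed (A B : R) (D : bounds) (k : nat) : Prop :=
  (aL D k <= cc k A <= aH D k) /\ (bL D k <= cc k B <= bH D k) /\
  forall t, A <= t <= B ->
    (cL D k <= dc k t <= cH D k) /\ (fL D k <= dfk k t <= fH D k) /\
    (dL D k <= dc k t / dfk k t <= dH D k) /\
    (hull_lo D k <= cc k t <= hull_hi D k).

Lemma enclosed_0 A B D : A <= B -> init_ok A B D -> enclosed A B D 0.
Proof.
  intros HAB (? & ? & ? & ? & ? & ? & ? & ? & ? & ?).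
  unfold enclosed, hull_lo, hull_hi. simpl cc.
  repeat match goal with E : _ = _ |- _ => rewrite E; clear E end.
  rewrite Rmin_left, Rmax_right by lra.
  split; [lra | split; [lra |]]. intros t Ht.
  rewrite dc_0, dfk_0. unfold Rdiv; rewrite Rinv_1. lra.
Qed.

Lemma endpoints_step A B D k :
  definite_sign (hull_lo D k) (hull_hi D k) -> step_ok A B D k ->
  aL D k <= cc k A <= aH D k -> bL D k <= cc k B <= bH D k ->
  (aL D (S k) <= cc (S k) A <= aH D (S k)) /\ (bL D (S k) <= cc (S k) B <= bH D (S k)).
Proof.
  unfold definite_sign, hull_lo, hull_hi; intros Hs (Hneg & Hpos & _) Ha Hb. simpl cc.
  pose proof (Rmin_l (aL D k) (bL D k)); pose proof (Rmin_r (aL D k) (bL D k)).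
  pose proof (Rmax_l (aH D k) (bH D k)); pose proof (Rmax_r (aH D k) (bH D k)).
  destruct (Rlt_dec (aH D k) 0) as [Hn | Hn].
  - destruct (Hneg Hn) as (? & ? & ? & ?).
    assert (bH D k < 0) by lra.
    pose proof (fpar_enclosure_neg A _ _ _ Hn Ha).
    pose proof (fpar_enclosure_neg B _ _ _ ltac:(eassumption) Hb).
    split; lra.
  - destruct (Hpos Hn) as (? & ? & ? & ?).
    assert (0 < aL D k /\ 0 < bL D k) as [HaL HbL] by lra.
    pose proof (fpar_enclosure_pos A _ _ _ HaL Ha).
    pose proof (fpar_enclosure_pos B _ _ _ HbL Hb).
    split; lra.
Qed.

Lemma derivatives_step A B D k t :
  step_ok A B D k -> definite_sign (fL D (S k)) (fH D (S k)) ->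
  cL D k <= dc k t <= cH D k -> fL D k <= dfk k t <= fH D k ->
  dL D k <= dc k t / dfk k t <= dH D k ->
  hull_lo D k <= cc k t <= hull_hi D k ->
  (cL D (S k) <= dc (S k) t <= cH D (S k)) /\
  (fL D (S k) <= dfk (S k) t <= fH D (S k)) /\
  (dL D (S k) <= dc (S k) t / dfk (S k) t <= dH D (S k)).
Proof.
  intros (_ & _ & Hc1 & Hc2 & Hf1 & Hf2 & Hd) Hfs Hdc Hdf Hq Hh.
  destruct (Hd Hfs) as [Hd1 Hd2].
  pose proof (product_enclosure _ _ _ _ _ _ Hdc Hh) as Gc.
  pose proof (product_enclosure _ _ _ _ _ _ Hdf Hh) as Gf.
  rewrite dc_S, dfk_S.
  assert (HF : fL D (S k) <= -2 * cc k t * dfk k t <= fH D (S k)) by lra.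
  pose proof (reciprocal_enclosure _ _ _ HF Hfs) as HI.
  assert (Hnz : -2 * cc k t * dfk k t <> 0)
    by (unfold definite_sign in Hfs; intro E; rewrite E in HF; lra).
  rewrite quotient_step by exact Hnz.
  repeat split; lra.
Qed.

Lemma enclosed_S A B D k :
  A <= B -> enclosed A B D k ->
  definite_sign (hull_lo D k) (hull_hi D k) -> step_ok A B D k ->
  definite_sign (cL D (S k)) (cH D (S k)) ->
  definite_sign (fL D (S k)) (fH D (S k)) -> enclosed A B D (S k).
Proof.
  intros HAB (Ha & Hb & Ht) Hs Hstep Hcs Hfs.
  destruct (endpoints_step A B D k Hs Hstep Ha Hb) as [Ha' Hb'].
  assert (Hder : forall t, A <= t <= B ->
    (cL D (S k) <= dc (S k) t <= cH D (S k)) /\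
    (fL D (S k) <= dfk (S k) t <= fH D (S k)) /\
    (dL D (S k) <= dc (S k) t / dfk (S k) t <= dH D (S k))).
  { intros t Htt. destruct (Ht t Htt) as (? & ? & ? & ?).
    apply (derivatives_step A B); assumption. }
  split; [exact Ha' | split; [exact Hb' |]].
  intros t Htt. destruct (Hder t Htt) as (D1 & D2 & D3).
  repeat (split; [assumption |]).
  apply (between_in_hull _ _ _ _ (cc (S k) A) (cc (S k) B)); [exact Ha' | exact Hb' |].
  apply (between_endpoints (fun s => cc (S k) s) (dc (S k)) A B (cL D (S k)) (cH D (S k)));
    [exact HAB | | | exact Hcs | exact Htt].
  - intro s. apply Derive_correct, ex_derive_cc.
  - intros s Hs'. apply (Hder s Hs').
Qed.

Lemma enclosed_upto A B D n :
  A <= B -> constructed A B D n ->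
  (forall k : nat, (k <= n)%nat ->
     definite_sign (cL D (S k)) (cH D (S k)) /\
     intervals_disjoint (aL D (S k)) (aH D (S k)) (bL D (S k)) (bH D (S k)) /\
     definite_sign (fL D (S k)) (fH D (S k))) ->
  forall k, (k <= S n)%nat -> enclosed A B D k.
Proof.
  intros HAB [Hinit Hsteps] Hchecks k. induction k as [|k IH]; intros Hk.
  - exact (enclosed_0 A B D HAB Hinit).
  - destruct (Hsteps k ltac:(lia)) as [Hs Hstep].
    destruct (Hchecks k ltac:(lia)) as (Hcs & _ & Hfs).
    exact (enclosed_S A B D k HAB (IH ltac:(lia)) Hs Hstep Hcs Hfs).
Qed.

Theorem corollary6p1 (A B delta : R) (n : nat) (D : bounds) :
  1 <= A -> A < B -> 0 < delta < 1 ->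
  constructed A B D n ->
  (forall k : nat, (k <= n)%nat ->
     definite_sign (cL D (S k)) (cH D (S k)) /\
     intervals_disjoint (aL D (S k)) (aH D (S k)) (bL D (S k)) (bH D (S k)) /\
     definite_sign (fL D (S k)) (fH D (S k))) ->
  (forall k : nat, (k < n)%nat ->
     forall x : R, hull_lo D (S k) < x < hull_hi D (S k) -> ~ (- delta < x < delta)) ->
  (aL D (S n) <= cc (S n) A <= aH D (S n)) /\
  (bL D (S n) <= cc (S n) B <= bH D (S n)) /\
  (forall t : R, A <= t <= B -> cL D (S n) <= dc (S n) t <= cH D (S n)) /\
  (forall t : R, A <= t <= B -> fL D (S n) <= dfk (S n) t <= fH D (S n)) /\
  (forall t : R, A <= t <= B ->
     dL D (S n) <= dc (S n) t / dfk (S n) t <= dH D (S n)) /\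
  (forall y : R, under_lo D (S n) <= y <= under_hi D (S n) ->
     exists t : R, A <= t <= B /\ cc (S n) t = y) /\
  (forall t : R, A <= t <= B ->
     hull_lo D (S n) <= cc (S n) t <= hull_hi D (S n)).
Proof.
  intros _ HAB _ Hcons Hchecks _.
  destruct (enclosed_upto A B D n ltac:(lra) Hcons Hchecks (S n) (le_n _))
    as (Ha & Hb & Ht).
  do 2 (split; [assumption |]).
  do 3 (split; [intros t Htt; apply (Ht t Htt) |]).
  split; [| intros t Htt; apply (Ht t Htt)].
  intros y Hy.
  destruct (Hchecks n (le_n _)) as (_ & Hdis & _).
  (* the intermediate value theorem fills the gap between a_{n+1} and b_{n+1} *)
  destruct (IVT_gen (fun t => cc (S n) t) A B y
              (continuity_of_derivable _ (ex_derive_cc (S n)))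
              (gap_between D (S n) _ _ y Hdis Ha Hb Hy)) as [t [Htt E]].
  rewrite Rmin_left, Rmax_right in Htt by lra.
  exists t; split; assumption.
Qed.
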